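(* Let $(N,v)$ be a balanced game. The set $\mathscr{E}(N,v)$ of effective coalitions equals the union of all minimal balanced collections $\mathscr{B}$ on $N$ such that $\sum_{S\in\mathscr{B}}\lambda^{\mathscr{B}}_S v(S)=v(N)$, where $\lambda^{\mathscr{B}}$ denotes the (unique) balancing weights of $\mathscr{B}$.
   Context: A game $(N,v)$: $N$ finite nonempty, $v:2^N\to\mathbb{R}$, $v(\varnothing)=0$; $x(S)=\sum_{i\in S}x_i$. Core: $C(N,v)=\{x\in\mathbb{R}^N\mid x(N)=v(N),\ x(S)\ge v(S)\ \forall S\subseteq N\}$; the game is balanced if $C(N,v)\ne\varnothing$. A coalition (nonempty $S\subseteq N$) is effective if $x(S)=v(S)$ for all $x\in C(N,v)$; $\mathscr{E}(N,v)$ is the set of effective coalitions. A collection $\mathscr{B}$ of nonempty subsets of $N$ is balanced if there exist positive weights $(\lambda_S)_{S\in\mathscr{B}}$ with $\sum_{S\in\mathscr{B}}\lambda_S\mathbf{1}^S=\mathbf{1}^N$ ($\mathbf{1}^S$ the characteristic vector); it is minimal if it contains no balanced proper subcollection, equivalently its balancing weights are unique. *)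

From mathcomp Require Import all_boot all_order all_algebra.
Set Implicit Arguments. Unset Strict Implicit. Unset Printing Implicit Defensive.
Import Order.TTheory GRing.Theory Num.Theory.
Local Open Scope ring_scope.

Section Games.
Variables (R : realFieldType) (N : finType).

Definition xsum (x : N -> R) (S : {set N}) : R := \sum_(i in S) x i.

Definition in_core (v : {set N} -> R) (x : N -> R) : Prop :=
  xsum x setT = v setT /\ forall S : {set N}, v S <= xsum x S.

Definition balanced_game (v : {set N} -> R) : Prop := exists x, in_core v x.

Definition effective (v : {set N} -> R) (S : {set N}) : Prop :=
  S != set0 /\ forall x, in_core v x -> xsum x S = v S.

Definition balancing_weights (B : {set {set N}}) (lam : {set N} -> R) : Prop :=
  (forall S, S \in B -> 0 < lam S) /\
  (forall i : N, \sum_(S in B | i \in S) lam S = 1).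

Definition balanced_coll (B : {set {set N}}) : Prop :=
  set0 \notin B /\ exists lam, balancing_weights B lam.

Definition minimal_balanced (B : {set {set N}}) : Prop :=
  balanced_coll B /\ forall C : {set {set N}}, C \proper B -> ~ balanced_coll C.

End Games.

(* If [B] is balanced with weights [lam] and [\sum lam v = v(N)], integrating
   the core inequalities against [lam] shows that every core element is tight
   on [B], so the members of [B] are effective. Conversely, [S] is effective
   exactly when the homogeneous system [x(T) >= t v(T)], [x(N) <= t v(N)],
   [x(S) > t v(S)] is infeasible; Farkas' lemma (proved by Fourier-Motzkin
   elimination) turns this into nonnegative multipliers, i.e. a balanced
   collection containing [S] whose weights satisfy [\sum lam v = v(N)].
   Shrinking it to a minimal balanced subcollection containing [S] preserves
   the identity, because the core is tight on the whole collection. *)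

From mathcomp Require Import all_boot all_order all_algebra.
From mathcomp Require Import ring lra.
From Stdlib Require Import Classical.
Set Implicit Arguments. Unset Strict Implicit. Unset Printing Implicit Defensive.
Import Order.TTheory GRing.Theory Num.Theory.
Local Open Scope ring_scope.

Section FourierMotzkin.
Variable R : realFieldType.

Lemma exists_between (K : finType) (P Q : pred K) (lo hi : K -> R) :
  (forall p m, P p -> Q m -> lo p <= hi m) ->
  exists t, (forall p, P p -> lo p <= t) /\ (forall m, Q m -> t <= hi m).
Proof.
move=> lohi; case: (pickP P) => [p0 Pp0|noP].
  have [p Pp pmax] := @arg_maxP _ _ _ p0 P lo Pp0.
  by exists (lo p); split=> [q /pmax|m Qm]; last exact: lohi.
case: (pickP Q) => [m0 Qm0|noQ].
  have [m Qm mmin] := @arg_minP _ _ _ m0 Q hi Qm0.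
  by exists (hi m); split=> [q|q /mmin]; rewrite ?noP.
by exists 0; split=> p; rewrite ?noP ?noQ.
Qed.

(* One Fourier-Motzkin step eliminating the variable [v] from the rows [a k]:
   rows with [a k v = 0] are kept, and every pair of a row [p] with [a p v > 0]
   and a row [m] with [a m v < 0] is replaced by the combination
   [a p v * row m - a m v * row p]. *)
Section Elimination.
Variables (K V : finType) (a : K -> V -> R) (v : V).

Definition fm_elim (f : K -> R) (k' : K + K * K) : R :=
  match k' with
  | inl k => if a k v == 0 then f k else 0
  | inr (p, m) =>
      if (0 < a p v) && (a m v < 0) then a p v * f m - a m v * f p else 0
  end.

Definition fm_lift (mu : K + K * K -> R) (k : K) : R :=
  (if a k v == 0 then mu (inl k) else 0)
  + \sum_m (if (0 < a k v) && (a m v < 0) then mu (inr (k, m)) * - a m v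
            else 0)
  + \sum_p (if (0 < a p v) && (a k v < 0) then mu (inr (p, k)) * a p v
            else 0).

Lemma fm_lift_ge0 mu : (forall k', 0 <= mu k') -> forall k, 0 <= fm_lift mu k.
Proof.
move=> mu_ge0 k; apply: addr_ge0; first apply: addr_ge0.
- by case: ifP.
- apply: sumr_ge0 => m _; case: ifP => // /andP[_ am].
  by rewrite mulr_ge0 // oppr_ge0 ltW.
- apply: sumr_ge0 => p _; case: ifP => // /andP[ap _].
  by rewrite mulr_ge0 // ltW.
Qed.

Lemma sum_fm_elim mu f :
  \sum_k' mu k' * fm_elim f k' = \sum_k fm_lift mu k * f k.
Proof.
rewrite big_sumType /=.
under [RHS]eq_bigr do rewrite !mulrDl.
rewrite !big_split /= -addrA; congr (_ + _).
  by apply: eq_bigr => k _; case: ifP; rewrite ?mul0r ?mulr0.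
under [X in _ = X + _]eq_bigr do rewrite mulr_suml.
under [X in _ = _ + X]eq_bigr do rewrite mulr_suml.
rewrite [X in _ = _ + X]exchange_big /= !pair_bigA /= -big_split /=.
apply: eq_bigr => -[p m] _ /=.
by case: ifP => _; [ring | rewrite mulr0 !mul0r addr0].
Qed.

Lemma fm_elim_var k' : fm_elim (a^~ v) k' = 0.
Proof.
case: k' => [k|[p m]] /=; first by case: ifP => // /eqP.
by case: ifP => //; rewrite mulrC subrr.
Qed.

Lemma fm_elim_zero (i : V) : (forall k, a k i = 0) ->
  forall k', fm_elim (a^~ i) k' = 0.
Proof.
move=> ai0 [k|[p m]] /=; case: ifP => // _.
by rewrite !ai0 !mulr0 subrr.
Qed.

(* If the eliminated system had a solution [x'], the constraints it contains
   squeeze a value [t] for the variable [v] between a lower and an upper bound,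
   and updating [x'] at [v] to [t] solves the original system. *)
Lemma fm_elim_infeasible (b : K -> R) :
  (forall x, exists k, \sum_i a k i * x i < b k) ->
  forall x, exists k', \sum_i fm_elim (a^~ i) k' * x i < fm_elim b k'.
Proof.
move=> infeas x'; apply/existsP; apply: contraT; rewrite negb_exists.
move=> /forallP elim_sol.
have {}elim_sol k' : fm_elim b k' <= \sum_i fm_elim (a^~ i) k' * x' i.
  by rewrite leNgt; apply: elim_sol.
pose r k := b k - \sum_i a k i * x' i + a k v * x' v.
have r_zero k : a k v = 0 -> r k <= 0.
  move=> akv; have := elim_sol (inl k); rewrite /= akv eqxx => le_b.
  by rewrite /r akv mul0r addr0 subr_le0.
have r_pair p m : 0 < a p v -> a m v < 0 -> r p / a p v <= r m / a m v.
  move=> ap am; have := elim_sol (inr (p, m)); rewrite /= ap am /=.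
  have -> : \sum_i (a p v * a m i - a m v * a p i) * x' i
            = a p v * \sum_i a m i * x' i - a m v * \sum_i a p i * x' i.
    by rewrite !mulr_sumr -sumrB; apply: eq_bigr => i _; ring.
  rewrite ler_pdivrMr // mulrAC ler_ndivlMr // /r => le_b; lra.
have [t [t_lo t_hi]] := exists_between r_pair.
pose x i := if i == v then t else x' i.
have [k lt_b] := infeas x.
have sum_x :
    \sum_i a k i * x i = \sum_i a k i * x' i - a k v * x' v + a k v * t.
  rewrite (bigD1 v) //= [in RHS](bigD1 v) //= /x eqxx.
  rewrite (eq_bigr (fun i => a k i * x' i)) => [|i /negbTE ->] //; ring.
have : r k <= a k v * t.
  case: (ltrgt0P (a k v)) => akv.
  - by have := t_lo k akv; rewrite ler_pdivrMr // mulrC.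
  - by have := t_hi k akv; rewrite ler_ndivlMr // mulrC.
  - by rewrite akv mul0r; apply: r_zero.
by move: lt_b; rewrite sum_x /r; lra.
Qed.

End Elimination.

Lemma farkas_support (V : finType) (n : nat) (X : {set V}) :
  (#|X| <= n)%N ->
  forall (K : finType) (a : K -> V -> R) (b : K -> R),
  (forall k i, i \notin X -> a k i = 0) ->
  (forall x : V -> R, exists k, \sum_i a k i * x i < b k) ->
  exists mu : K -> R, [/\ forall k, 0 <= mu k,
     forall i, \sum_k mu k * a k i = 0 & 0 < \sum_k mu k * b k].
Proof.
elim: n X => [|n IH] X sizeX K a b suppX infeas.
  move: sizeX; rewrite leqn0 cards_eq0 => /eqP X0.
  have a0 k i : a k i = 0 by apply: suppX; rewrite X0 inE.
  have [k] := infeas (fun _ => 0).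
  rewrite big1 => [bk|i _]; last by rewrite mulr0.
  exists (fun j => (j == k)%:R); split=> [j|i|]; first by rewrite ler0n.
    by rewrite big1 // => j _; rewrite a0 mulr0.
  rewrite (bigD1 k) //= eqxx mul1r big1 ?addr0 // => j /negbTE ->.
  by rewrite mul0r.
have [X0|[v vX]] := set_0Vmem X.
  by apply: (IH X) => //; rewrite X0 cards0.
have sizeXv : (#|X :\ v| <= n)%N by move: sizeX; rewrite (cardsD1 v X) vX.
have suppXv k' i : i \notin X :\ v -> fm_elim a v (a^~ i) k' = 0.
  rewrite !inE negb_and negbK => /orP[/eqP ->|iX]; first exact: fm_elim_var.
  by apply: fm_elim_zero => k; apply: suppX.
have [mu [mu_ge0 mu_a mu_b]] :=
  IH _ sizeXv _ _ _ suppXv (fm_elim_infeasible v infeas).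
exists (fm_lift a v mu); split; first exact: fm_lift_ge0.
  by move=> i; rewrite -sum_fm_elim.
by rewrite -sum_fm_elim.
Qed.

Theorem farkas (K V : finType) (a : K -> V -> R) (b : K -> R) :
  (forall x : V -> R, exists k, \sum_i a k i * x i < b k) ->
  exists mu : K -> R, [/\ forall k, 0 <= mu k,
     forall i, \sum_k mu k * a k i = 0 & 0 < \sum_k mu k * b k].
Proof.
by apply: (farkas_support (leqnn #|[set: V]|)) => k i; rewrite inE.
Qed.

End FourierMotzkin.

Section Games.
Variables (R : realFieldType) (N : finType).
Implicit Types (v w : {set N} -> R) (x : N -> R) (B C : {set {set N}}).

Lemma sum_balancing_xsum {B} {lam : {set N} -> R} x :
  (forall i, \sum_(S in B | i \in S) lam S = 1) ->
  \sum_(T in B) lam T * xsum x T = xsum x setT.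
Proof.
move=> lam_one; rewrite /xsum.
under eq_bigr do rewrite mulr_sumr.
rewrite (exchange_big_dep predT) //= [RHS](eq_bigl predT) => [|i]; last first.
  by rewrite inE.
by apply: eq_bigr => i _; rewrite -mulr_suml lam_one mul1r.
Qed.

Lemma in_core_balancing_tight {v B lam x} :
  balancing_weights B lam -> v setT <= \sum_(T in B) lam T * v T ->
  in_core v x -> forall T, T \in B -> xsum x T = v T.
Proof.
move=> [lam_gt0 lam_one] le_vN [xN xge] T TB.
have gap_ge0 U : U \in B -> 0 <= lam U * (xsum x U - v U).
  by move=> UB; rewrite mulr_ge0 ?subr_ge0 ?xge // ltW ?lam_gt0.
have gaps0 : \sum_(U in B) lam U * (xsum x U - v U) = 0.
  apply/eqP; rewrite eq_le sumr_ge0 ?andbT; last exact: gap_ge0.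
  under eq_bigr do rewrite mulrBr.
  by rewrite sumrB sum_balancing_xsum // xN subr_le0.
have /eqP := psumr_eq0P gap_ge0 gaps0 TB.
by rewrite mulf_eq0 gt_eqF ?lam_gt0 //= subr_eq0 => /eqP.
Qed.

(* The weights [lam - t mu] stay nonnegative for [t = min_C lam/mu], vanish
   at a minimizer [T0] and are untouched on [S \notin C]; after rescaling by
   [1 - t > 0] their support is a balanced proper subcollection containing
   [S]. *)
Lemma balanced_coll_shrink B C S :
  balanced_coll R B -> S \in B -> C \proper B -> balanced_coll R C ->
  S \notin C ->
  exists D : {set {set N}}, [/\ D \proper B, balanced_coll R D & S \in D].
Proof.
move=> [B0 [lam [lam_gt0 lam_one]]] SB ltCB [_ [mu [mu_gt0 mu_one]]] SNC.
have sCB := proper_sub ltCB.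
have [i0 i0S] : exists i0, i0 \in S.
  by apply/set0Pn; apply: contraNneq B0 => <-.
have [U0 U0C] : exists U0, U0 \in C.
  apply/set0Pn; apply: contra_eq_neq (mu_one i0) => ->.
  by rewrite big_pred0 => [|U]; rewrite ?inE // eq_sym oner_neq0.
have [T0 T0C T0min] := @arg_minP _ _ _ U0 (mem C) (fun T => lam T / mu T) U0C.
have {}T0C : T0 \in C := T0C.
set t := lam T0 / mu T0 in T0min.
pose w T := lam T - t * (if T \in C then mu T else 0).
have w_ge0 T : T \in B -> 0 <= w T.
  move=> TB; rewrite /w; case: ifP => TC.
    by rewrite subr_ge0 -ler_pdivlMr ?mu_gt0 // T0min.
  by rewrite mulr0 subr0 ltW ?lam_gt0.
have wT0 : w T0 = 0 by rewrite /w T0C /t divfK ?subrr // gt_eqF ?mu_gt0.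
have wS : w S = lam S by rewrite /w (negbTE SNC) mulr0 subr0.
have w_sum i : \sum_(T in B | i \in T) w T = 1 - t.
  rewrite sumrB lam_one -mulr_sumr -[in RHS](mulr1 t); congr (1 - t * _).
  rewrite -(mu_one i) big_mkcond [RHS]big_mkcond /=; apply: eq_bigr => T _.
  case: (boolP (T \in C)) => [/(subsetP sCB) ->|] //.
  by case: (_ && _).
have t_lt1 : 0 < 1 - t.
  rewrite -(w_sum i0) (bigD1 S) /=; last by rewrite SB i0S.
  rewrite ltr_pwDl ?wS ?lam_gt0 // sumr_ge0 // => T /andP[/andP[TB _] _].
  exact: w_ge0.
exists [set T in B | 0 < w T]; split.
- apply/properP; split; first by apply/subsetP => T; rewrite inE => /andP[].
  by exists T0; [exact: (subsetP sCB) | rewrite inE wT0 ltxx andbF].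
- split; first by rewrite inE (negbTE B0).
  exists (fun T => w T / (1 - t)); split=> [T|i].
    by rewrite inE => /andP[_ wT]; apply: divr_gt0.
  rewrite -mulr_suml -[RHS](divff (lt0r_neq0 t_lt1)) -(w_sum i).
  congr (_ / _).
  rewrite big_mkcond [RHS]big_mkcond /=.
  apply: eq_bigr => T _; rewrite inE; case: (boolP (T \in B)) => //= TB.
  have := w_ge0 T TB; rewrite le_eqVlt => /orP[/eqP <-|->] //.
  by rewrite ltxx; case: ifP.
- by rewrite inE SB wS lam_gt0.
Qed.

Lemma minimal_balanced_sub B S :
  balanced_coll R B -> S \in B ->
  exists2 B' : {set {set N}}, B' \subset B & minimal_balanced R B' /\ S \in B'.
Proof.
move: {2}#|B| (leqnn #|B|) => n; elim: n B => [|n IH] B sizeB balB SB.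
  by move: sizeB SB; rewrite leqn0 cards_eq0 => /eqP ->; rewrite inE.
have [[C ltCB balC]|noC] :=
  classic (exists2 C : {set {set N}}, C \proper B & balanced_coll R C).
  have [D [ltDB balD SD]] : exists D : {set {set N}},
      [/\ D \proper B, balanced_coll R D & S \in D].
    have [SC|SNC] := boolP (S \in C); first by exists C.
    exact: balanced_coll_shrink ltCB balC SNC.
  have sizeD : (#|D| <= n)%N by rewrite -ltnS (leq_trans (proper_card ltDB)).
  have [B' sB'D minB'] := IH D sizeD balD SD.
  by exists B' => //; apply: subset_trans sB'D (proper_sub ltDB).
by exists B => //; split=> //; split=> // C ltCB balC; apply: noC; exists C.
Qed.

Definition weight_support w : {set {set N}} :=
  [set T | (T != set0) && (0 < w T)].

Lemma weight_support_balancing w :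
  (forall T, 0 <= w T) -> (forall i, \sum_(T : {set N} | i \in T) w T = 1) ->
  balancing_weights (weight_support w) w.
Proof.
move=> w_ge0 w_one; split=> [T|i]; first by rewrite inE => /andP[].
rewrite -(w_one i) big_mkcond [RHS]big_mkcond /=; apply: eq_bigr => T _.
rewrite inE; case: (boolP (i \in T)) => iT; rewrite ?andbF ?andbT //.
have -> : T != set0 by apply/set0Pn; exists i.
by have := w_ge0 T; rewrite le_eqVlt => /orP[/eqP <-|->]; rewrite ?ltxx.
Qed.

Lemma sum_weight_support w (f : {set N} -> R) :
  (forall T, 0 <= w T) -> f set0 = 0 ->
  \sum_(T in weight_support w) w T * f T = \sum_(T : {set N}) w T * f T.
Proof.
move=> w_ge0 f0; rewrite big_mkcond; apply: eq_bigr => T _; rewrite inE.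
have [->|_] /= := eqVneq T set0; first by rewrite f0 mulr0.
by have := w_ge0 T; rewrite le_eqVlt => /orP[/eqP <-|->]; rewrite ?ltxx ?mul0r.
Qed.

Lemma sum_sumType_unit (F : N + unit -> R) :
  \sum_j F j = \sum_i F (inl i) + F (inr tt).
Proof. by rewrite big_sumType (big_pred1 tt) // => -[]. Qed.

Lemma sum_sumType_bool (F : {set N} + bool -> R) :
  \sum_k F k = \sum_T F (inl T) + (F (inr true) + F (inr false)).
Proof. by rewrite big_sumType big_bool. Qed.

Lemma sum_indicator (T : {set N}) (x : N -> R) :
  \sum_i (i \in T)%:R * x i = xsum x T.
Proof.
rewrite /xsum [RHS]big_mkcond; apply: eq_bigr => i _.
by case: (i \in T); rewrite ?mul1r ?mul0r.
Qed.

Section Effectivity.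
Variables (v : {set N} -> R) (S : {set N}).

(* The homogenization of "the core contains some x with x(S) > v(S)": in the
   unknowns [x : N -> R] and [t : R] (the variable [inr tt]), the rows are
   [x(T) >= t v(T)] for every [T], [t v(N) >= x(N)] and
   [x(S) >= t v(S) + 1]. *)
Definition effectivity_row (k : {set N} + bool) (j : N + unit) : R :=
  match k, j with
  | inl T, inl i => (i \in T)%:R
  | inl T, inr _ => - v T
  | inr true, inl _ => -1
  | inr true, inr _ => v setT
  | inr false, inl i => (i \in S)%:R
  | inr false, inr _ => - v S
  end.

Definition effectivity_rhs (k : {set N} + bool) : R :=
  if k is inr false then 1 else 0.

(* A solution [(x, t)] makes [(x + (|t| + 1) y) / (t + |t| + 1)] a core element
   [y'] with [y'(S) > v(S)], for any core element [y]. *)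
Lemma effectivity_infeasible y :
  in_core v y -> effective v S ->
  forall z, exists k, \sum_j effectivity_row k j * z j < effectivity_rhs k.
Proof.
move=> [yN yge] [_ S_tight] z; apply/existsP; apply: contraT.
rewrite negb_exists => /forallP no_viol.
have {}no_viol k : effectivity_rhs k <= \sum_j effectivity_row k j * z j.
  by rewrite leNgt; apply: no_viol.
pose x i := z (inl i); pose t := z (inr tt).
have row_sum T : \sum_j effectivity_row (inl T) j * z j = xsum x T - v T * t.
  by rewrite sum_sumType_unit sum_indicator mulNr.
have xT T : v T * t <= xsum x T.
  by have := no_viol (inl T); rewrite row_sum subr_ge0.
have xN : xsum x setT <= v setT * t.
  have := no_viol (inr true); rewrite sum_sumType_unit /=.
  rewrite (eq_bigr (fun i => - x i)) ?sumrN => [|i _]; last by rewrite mulN1r.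
  have -> : xsum x setT = \sum_i x i by apply: eq_bigl => i; rewrite inE.
  by rewrite addrC subr_ge0.
have xS : v S * t + 1 <= xsum x S.
  have := no_viol (inr false); rewrite sum_sumType_unit sum_indicator /=.
  by rewrite mulNr -lerBrDl.
pose l := `|t| + 1; pose s := t + l.
have l_gt0 : 0 < l by rewrite ltr_wpDl.
have s_gt0 : 0 < s by have := ler_norm (- t); rewrite normrN /s /l; lra.
pose y' i := (x i + l * y i) / s.
have y'E T : xsum y' T = (xsum x T + l * xsum y T) / s.
  by rewrite /xsum -mulr_suml big_split mulr_sumr.
have y'_core : in_core v y'.
  split=> [|T]; rewrite y'E.
    apply: (mulIf (lt0r_neq0 s_gt0)); rewrite divfK ?lt0r_neq0 // yN.
    by have := xT setT; move: xN; rewrite /s; lra.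
  rewrite ler_pdivlMr // /s mulrDr; apply: lerD; first exact: xT.
  by rewrite mulrC ler_pM2l ?yge.
have := S_tight y' y'_core; rewrite y'E (S_tight y) //.
move=> /(canRL (divfK (lt0r_neq0 s_gt0))).
by move: xS; rewrite /s; lra.
Qed.

(* Reading off the Farkas multipliers: [c] (for the row of [S]) is positive,
   the column of [i \in S] forces the multiplier [d] of [x(N) <= t v(N)] to be
   positive, and [(mu_T + c [T = S]) / d] is the required weight system. *)
Lemma effective_dual_weights y :
  in_core v y -> effective v S ->
  exists w, [/\ forall T, 0 <= w T, 0 < w S,
    forall i, \sum_(T : {set N} | i \in T) w T = 1 &
    \sum_T w T * v T = v setT].
Proof.
move=> y_core effS; have [S0 _] := effS.
have [mu [mu_ge0 mu_col mu_rhs]] := farkas (effectivity_infeasible y_core effS).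
pose c := mu (inr false); pose d := mu (inr true).
pose u T := mu (inl T) + (T == S)%:R * c.
have c_gt0 : 0 < c.
  move: mu_rhs; rewrite sum_sumType_bool big1 => [|T _]; last by rewrite mulr0.
  by rewrite /= !mulr0 !add0r mulr1.
have u_ge0 T : 0 <= u T by rewrite /u addr_ge0 ?mu_ge0 ?mulr_ge0 ?ler0n ?ltW.
have col_i i : \sum_(T : {set N} | i \in T) mu (inl T) + (i \in S)%:R * c = d.
  have := mu_col (inl i); rewrite sum_sumType_bool /= mulrN1.
  rewrite (eq_bigr (fun T : {set N} => if i \in T then mu (inl T) else 0))
    -?big_mkcond.
    by rewrite /c /d; lra.
  by move=> T _; case: (i \in T); rewrite ?mulr1 ?mulr0.
have col_t : \sum_T mu (inl T) * v T + c * v S = d * v setT.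
  have := mu_col (inr tt); rewrite sum_sumType_bool /=.
  under eq_bigr do rewrite mulrN.
  by rewrite sumrN /c /d; lra.
have sum_S (f : {set N} -> bool) :
    \sum_(T : {set N} | f T) (T == S)%:R * c = (f S)%:R * c.
  rewrite big_mkcond (bigD1 S) //= eqxx big1 ?addr0 => [|T /negbTE ->].
    by case: (f S); rewrite ?mul1r ?mul0r.
  by case: (f T); rewrite ?mul0r.
have u_col i : \sum_(T : {set N} | i \in T) u T = d.
  by rewrite big_split /= sum_S col_i.
have [i0 i0S] := set0Pn _ S0.
have d_gt0 : 0 < d.
  by rewrite -(col_i i0) i0S mul1r ltr_wpDl // sumr_ge0.
have sum_uv : \sum_T u T * v T = d * v setT.
  under eq_bigr do rewrite mulrDl.
  rewrite big_split /= -col_t; congr (_ + _).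
  rewrite (bigD1 S) //= eqxx mul1r big1 ?addr0 // => T /negbTE ->.
  by rewrite !mul0r.
exists (fun T => u T / d); split=> [T||i|].
- by rewrite divr_ge0 // ltW.
- by rewrite divr_gt0 // /u eqxx mul1r ltr_wpDl ?mu_ge0.
- by rewrite -mulr_suml u_col divff // gt_eqF.
- under eq_bigr do rewrite mulrAC.
  by rewrite -mulr_suml sum_uv mulrC mulKf // gt_eqF.
Qed.

End Effectivity.

End Games.

Theorem lemma5p3 (R : realFieldType) (N : finType) (v : {set N} -> R)
    (HN : (0 < #|N|)%N) (Hv0 : v set0 = 0) (Hbal : balanced_game v) :
  forall S : {set N},
    effective v S <->
    exists B : {set {set N}},
      [/\ minimal_balanced R B, S \in B &
          exists lam : {set N} -> R,
            balancing_weights B lam /\ \sum_(T in B) lam T * v T = v setT].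
Proof.
move=> S; split=> [effS|[B [[[B0 _] _] SB [lam [lamB value]]]]]; last first.
  split; first by apply: contraNneq B0 => <-.
  move=> x x_core; apply: in_core_balancing_tight lamB _ x_core _ SB.
  by rewrite value.
have [y y_core] := Hbal; have [S0 _] := effS.
have [w [w_ge0 wS w_one w_value]] := effective_dual_weights y_core effS.
have wB := weight_support_balancing w_ge0 w_one.
have value : v setT <= \sum_(T in weight_support w) w T * v T.
  by rewrite sum_weight_support // w_value.
have balB : balanced_coll R (weight_support w).
  by split; [rewrite inE eqxx | exists w].
have SB : S \in weight_support w by rewrite inE S0.
have [B sBw [minB SB']] := minimal_balanced_sub balB SB.
exists B; split=> //; have [_ [lam lamB]] := minB.1.
exists lam; split; first exact: lamB.
rewrite -y_core.1 -(sum_balancing_xsum y lamB.2).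
apply: eq_bigr => T TB; congr (_ * _); apply/esym.
exact: in_core_balancing_tight wB value y_core _ (subsetP sBw T TB).
Qed.
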